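(* Let $Z$ be a domain, $\pi$ a probability distribution on $Z$, $0\le a\le b$, $\mathcal{F}$ a family of functions from $Z$ to $[a,b]$, $p\in(0,1)$ and $n\ge1$. The function $g:Z^n\to\mathbb{R}$, \[g(X_1,\dots,X_n)=\sup_{f\in\mathcal{F}}\frac{\mathbb{E}_\pi[f]-\frac1n\sum_{i=1}^n f(X_i)}{\max\{p,\mathbb{E}_\pi[f]\}},\] satisfies the bounded difference inequality with constants $c_i=\frac{|b-a|}{np}$, $1\le i\le n$.
   Context: A function $g:\mathcal{X}^n\to\mathbb{R}$ satisfies the bounded difference inequality with nonnegative constants $c_1,\dots,c_n$ if for every $i$, $\sup_{x_1,\dots,x_n,x_i'\in\mathcal{X}}|g(x_1,\dots,x_n)-g(x_1,\dots,x_{i-1},x_i',x_{i+1},\dots,x_n)|\le c_i$. *)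

From HB Require Import structures.
From mathcomp Require Import all_boot all_order all_algebra.
From mathcomp Require Import all_classical all_reals all_analysis.
Set Implicit Arguments. Unset Strict Implicit. Unset Printing Implicit Defensive.
Import Order.TTheory GRing.Theory Num.Theory.
Local Open Scope classical_set_scope.
Local Open Scope ring_scope.

Definition bounded_difference (X : Type) (R : realType) (n : nat)
  (g : ('I_n -> X) -> R) (c : 'I_n -> R) : Prop :=
  forall (i : 'I_n) (x : 'I_n -> X) (xi' : X),
    `|g x - g (fun j => if j == i then xi' else x j)| <= c i.

Definition expect d (T : measurableType d) (R : realType)
  (P : probability T R) (f : T -> R) : R := Rintegral P setT f.

Definition g_ratio d (T : measurableType d) (R : realType)
  (P : probability T R) (F : set (T -> R)) (p : R) (n : nat)
  (X : 'I_n -> T) : R :=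
  sup [set ((expect P f - n%:R^-1 * \sum_(i < n) f (X i))
              / Num.max p (expect P f)) | f in F].

From HB Require Import structures.
From mathcomp Require Import all_boot all_order all_algebra.
From mathcomp Require Import all_classical all_reals all_analysis.
From mathcomp Require Import lra.
Set Implicit Arguments. Unset Strict Implicit. Unset Printing Implicit Defensive.
Import Order.TTheory GRing.Theory Num.Theory.
Local Open Scope classical_set_scope.
Local Open Scope ring_scope.

(* Replacing X_i changes the empirical mean of f by (f X_i' - f X_i)/n, and the
   denominator max(p, E f) does not depend on the sample and is at least p, so
   every ratio in the supremum moves by at most |b - a|/(n p).  All ratios are
   bounded above by 1, hence the two suprema are finite and differ by at most
   the same amount. *)

Lemma sup_image_le_add (R : realType) (I : Type) (F : set I) (u v : I -> R)
    (c : R) :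
  F !=set0 -> has_ubound (v @` F) -> (forall i, F i -> u i <= v i + c) ->
  sup (u @` F) <= sup (v @` F) + c.
Proof.
move=> [i0 Fi0] ubv uv; apply: ge_sup; first by exists (u i0), i0.
move=> _ [i Fi <-]; apply: le_trans (uv i Fi) _.
by rewrite lerD2r; apply: ub_le_sup => //; exists i.
Qed.

Lemma normr_sup_image_sub_le (R : realType) (I : Type) (F : set I)
    (u v : I -> R) (c : R) :
  has_ubound (u @` F) -> has_ubound (v @` F) ->
  (forall i, F i -> `|u i - v i| <= c) -> 0 <= c ->
  `|sup (u @` F) - sup (v @` F)| <= c.
Proof.
move=> ubu ubv uvc c0.
have [->|/set0P F0] := eqVneq F set0.
  by rewrite !image_set0 subrr normr0.
have uv : sup (u @` F) <= sup (v @` F) + c.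
  by apply: sup_image_le_add => // i /uvc; rewrite ler_norml; lra.
have vu : sup (v @` F) <= sup (u @` F) + c.
  by apply: sup_image_le_add => // i /uvc; rewrite ler_norml; lra.
by rewrite ler_norml; apply/andP; split; lra.
Qed.

Lemma sumr_update_sub (X : Type) (V : zmodType) (n : nat) (h : X -> V)
    (x : 'I_n -> X) (i : 'I_n) (y : X) :
  \sum_(j < n) h (if j == i then y else x j) - \sum_(j < n) h (x j)
    = h y - h (x i).
Proof.
rewrite (bigD1 i) //= (bigD1 i (P := xpredT)) //= eqxx.
rewrite (eq_bigr (h \o x)) => [|j /negbTE -> //].
by rewrite opprD addrACA subrr addr0.
Qed.

Lemma ratio_max_le1 (R : realFieldType) (p e m : R) :
  0 < p -> 0 <= m -> (e - m) / Num.max p e <= 1.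
Proof.
move=> p0 m0; have M0 : 0 < Num.max p e by rewrite lt_max p0.
have eM : e <= Num.max p e by rewrite le_max lexx orbT.
by rewrite ler_pdivrMr // mul1r; lra.
Qed.

Lemma ratio_max_diff_le (R : realFieldType) (p e m1 m2 : R) :
  0 < p -> `|(e - m1) / Num.max p e - (e - m2) / Num.max p e|
           <= `|m2 - m1| / p.
Proof.
move=> p0; have pM : p <= Num.max p e by rewrite le_max lexx.
have M0 : 0 < Num.max p e := lt_le_trans p0 pM.
rewrite -mulrBl (_ : e - m1 - (e - m2) = m2 - m1); last by lra.
have Minv0 : 0 <= (Num.max p e)^-1 by rewrite invr_ge0 ltW.
rewrite normrM (ger0_norm Minv0).
by apply: ler_wpM2l => //; rewrite lef_pV2 ?posrE.
Qed.

Lemma mean_ge0 (R : realFieldType) (n : nat) (u : 'I_n -> R) :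
  (forall j, 0 <= u j) -> 0 <= n%:R^-1 * \sum_(j < n) u j.
Proof. by move=> u0; rewrite mulr_ge0 ?invr_ge0 ?ler0n ?sumr_ge0. Qed.

Lemma normr_sub_le_interval (R : realDomainType) (a b y z : R) :
  a <= y <= b -> a <= z <= b -> `|y - z| <= `|b - a|.
Proof.
move=> /andP[ay yb] /andP[az zb].
rewrite [`|b - a|]ger0_norm ?subr_ge0 ?(le_trans ay yb) //.
by rewrite ler_norml; apply/andP; split; lra.
Qed.

Theorem lemma5 (d : measure_display) (T : measurableType d) (R : realType)
  (P : probability T R) (a b : R) (F : set (T -> R)) (p : R) (n : nat) :
  0 <= a -> a <= b ->
  (forall f, F f -> measurable_fun setT f) ->
  (forall f, F f -> forall z, a <= f z <= b) ->
  0 < p < 1 -> (0 < n)%N ->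
  bounded_difference (g_ratio P F p (n:=n))
    (fun _ => `|b - a| / (n%:R * p)).
Proof.
move=> a0 _ _ Fab /andP[p0 _] _ i x y.
have ub1 (X : 'I_n -> T) : has_ubound [set (expect P f - n%:R^-1 *
    \sum_(j < n) f (X j)) / Num.max p (expect P f) | f in F].
  exists 1 => _ [f Ff <-]; apply: ratio_max_le1 => //.
  by apply: mean_ge0 => j; apply: le_trans a0 _; case/andP: (Fab f Ff (X j)).
apply: normr_sup_image_sub_le => // [f Ff|]; last first.
  by rewrite divr_ge0 ?mulr_ge0 ?ler0n // ltW.
apply: le_trans; first exact: ratio_max_diff_le.
rewrite -mulrBr sumr_update_sub normrM ger0_norm ?invr_ge0 ?ler0n //.
rewrite invfM mulrA (mulrC `|b - a|).
apply: ler_wpM2r; first by rewrite invr_ge0 ltW.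
apply: ler_wpM2l; first by rewrite invr_ge0 ler0n.
exact: normr_sub_le_interval (Fab f Ff y) (Fab f Ff (x i)).
Qed.
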